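(* Let $K\ge 2$ and $M,N,d$ be positive integers. If $d\le\min(M,N-1)$ (in particular $N\ge 2$), then the symmetric system $(M\times N,d)^K$ is proper if and only if the symmetric system $((M+1)\times(N-1),d)^K$ is proper (equivalently, one is improper iff the other is). Similarly, if $d\le\min(M-1,N)$, then $(M\times N,d)^K$ is proper if and only if $((M-1)\times(N+1),d)^K$ is proper.
   Context: A $K$-user MIMO interference system $\Pi_{k=1}^K(M^{[k]}\times N^{[k]},d^{[k]})$ is specified by positive integers $M^{[k]}$, $N^{[k]}$ and $d^{[k]}\le\min(M^{[k]},N^{[k]})$, $k\in\mathcal{K}=\{1,\dots,K\}$; the symmetric system $(M\times N,d)^K$ has $M^{[k]}=M$, $N^{[k]}=N$, $d^{[k]}=d$ for all $k$. Its variables are: for each $j\in\mathcal K$ and $n\in\{1,\dots,d^{[j]}\}$ a set $T_{j,n}$ of $M^{[j]}-d^{[j]}$ variables, and for each $k\in\mathcal K$, $m\in\{1,\dots,d^{[k]}\}$ a set $R_{k,m}$ of $N^{[k]}-d^{[k]}$ variables, all pairwise disjoint. The equations are $E^{kj}_{mn}$ for $j,k\in\mathcal K$, $k\ne j$, $m\le d^{[k]}$, $n\le d^{[j]}$, forming the set $\mathcal E$, with $\mathrm{var}(E^{kj}_{mn})=T_{j,n}\cup R_{k,m}$. The system is proper if for every $S\subseteq\mathcal E$, $|S|\le\left|\bigcup_{E\in S}\mathrm{var}(E)\right|$, and improper otherwise. *)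

From mathcomp Require Import all_boot.
Set Implicit Arguments. Unset Strict Implicit. Unset Printing Implicit Defensive.

(* A K-user MIMO interference system Pi_k (M^[k] x N^[k], d^[k]),
   users indexed by 'I_K, with parameter functions Mv Nv dv : 'I_K -> nat. *)
Section System.
Variables (K : nat) (Mv Nv dv : 'I_K -> nat).

(* variables of T_{j,n}: (j, (n, i)) with n < d^[j], i < M^[j] - d^[j] *)
Definition tvar := {j : 'I_K & ('I_(dv j) * 'I_(Mv j - dv j))%type}.
(* variables of R_{k,m}: (k, (m, i)) with m < d^[k], i < N^[k] - d^[k] *)
Definition rvar := {k : 'I_K & ('I_(dv k) * 'I_(Nv k - dv k))%type}.
Definition var := (tvar + rvar)%type.

(* candidate equation indices E^{kj}_{mn}: ((k,j), (m,n)) *)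
Definition eqn := {p : 'I_K * 'I_K & ('I_(dv p.1) * 'I_(dv p.2))%type}.

Definition Eset : {set eqn} := [set e : eqn | (tag e).1 != (tag e).2].

(* var(E^{kj}_{mn}) = T_{j,n} cup R_{k,m} *)
Definition vars (e : eqn) : {set var} :=
  let k := (tag e).1 in let j := (tag e).2 in
  let m := (tagged e).1 in let n := (tagged e).2 in
  [set x : var | match x with
                 | inl t => (tag t == j) && (val (tagged t).1 == val n)
                 | inr r => (tag r == k) && (val (tagged r).1 == val m)
                 end].

Definition proper : Prop :=
  forall S : {set eqn}, S \subset Eset ->
    #|S| <= #|\bigcup_(e in S) vars e|.
End System.

Definition sym_proper (K M N d : nat) : Prop :=
  proper (fun _ : 'I_K => M) (fun _ => N) (fun _ => d).

From Pilot Require Import Defs.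
From mathcomp Require Import all_boot zify.
Set Implicit Arguments. Unset Strict Implicit. Unset Printing Implicit Defensive.

(* For K >= 2 users, (M x N, d)^K is proper iff (K - 1) d <= (M - d) + (N - d).
   Necessity: the whole equation set has K (K - 1) d^2 equations in only
   K d (M - d) + K d (N - d) variables.  Sufficiency: if the equations of S involve
   t sets T_{j,n} and r sets R_{k,m}, they involve t (M - d) + r (N - d) variables,
   while each T_{j,n} (resp. R_{k,m}) lies in at most (K - 1) d equations, so
   |S| <= min(t, r) (K - 1) d, and a weighted average of the two bounds concludes.
   The criterion depends on M and N only through M + N, which is unchanged when an
   antenna moves between the two sides. *)

Lemma card_sigT_const (I T : finType) : #|{: {i : I & T}}| = #|I| * #|T|.
Proof.
rewrite card_tagged (cardE I).
by elim: (enum I) => //= i s ->; rewrite mulSn.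
Qed.

Lemma card_le_image_mul (A B C : finType) (f : A -> B) (g : A -> C) (S : {set A}) :
  {in S &, injective (fun x => (f x, g x))} -> #|S| <= #|f @: S| * #|C|.
Proof.
move=> /card_in_imset <-; rewrite -cardsT -cardsX.
apply/subset_leq_card/subsetP => _ /imsetP [x xS ->].
by rewrite !inE /= andbT imset_f.
Qed.

Lemma leq_convex_bound (s t r a b c : nat) :
  s <= t * c -> s <= r * c -> c <= a + b -> s <= t * a + r * b.
Proof.
move=> s_tc s_rc c_ab; have [ab0|ab_gt0] := posnP (a + b).
  by move: c_ab s_tc; rewrite ab0 leqn0 => /eqP ->; rewrite muln0 leqn0 => /eqP ->.
rewrite -(leq_pmul2l ab_gt0) mulnDl.
have as_le : a * s <= a * (t * c) by rewrite leq_mul2l s_tc orbT.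
have bs_le : b * s <= b * (r * c) by rewrite leq_mul2l s_rc orbT.
have c_le : (t * a + r * b) * c <= (t * a + r * b) * (a + b) by rewrite leq_mul2l c_ab orbT.
nia.
Qed.

Lemma lift_unlift_neq n (j k : 'I_n.+2) : k != j -> lift j (odflt ord0 (unlift j k)) = k.
Proof. by case: unliftP => //= ->; rewrite eqxx. Qed.

Section SymmetricSystem.
Variables K M N d : nat.

Local Notation Mv := (fun _ : 'I_K.+2 => M).
Local Notation Nv := (fun _ : 'I_K.+2 => N).
Local Notation dv := (fun _ : 'I_K.+2 => d).
Local Notation equation := (Defs.eqn dv).
Local Notation E := (Eset dv).
Local Notation vars := (vars Mv Nv).

(* The indices (j, n) of T_{j,n} and (k, m) of R_{k,m} in var(E^{kj}_{mn}). *)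
Definition tx_index (e : equation) : ('I_K.+2 * 'I_d)%type := ((tag e).2, (tagged e).2).
Definition rx_index (e : equation) : ('I_K.+2 * 'I_d)%type := ((tag e).1, (tagged e).1).

Lemma card_eqn_tx (S : {set equation}) :
  S \subset E -> #|S| <= #|tx_index @: S| * (K.+1 * d).
Proof.
move=> SE; pose other (e : equation) : ('I_K.+1 * 'I_d)%type :=
  (odflt ord0 (unlift (tag e).2 (tag e).1), (tagged e).1).
have -> : K.+1 * d = #|{: 'I_K.+1 * 'I_d}| by rewrite card_prod !card_ord.
apply: (card_le_image_mul (g := other)).
move=> [[k1 j1] [m1 n1]] [[k2 j2] [m2 n2]] /(subsetP SE) + /(subsetP SE).
rewrite !inE /= => kj1 kj2 [j12 -> k12 ->]; subst j2.
by rewrite -(lift_unlift_neq kj1) -(lift_unlift_neq kj2) k12.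
Qed.

Lemma card_eqn_rx (S : {set equation}) :
  S \subset E -> #|S| <= #|rx_index @: S| * (K.+1 * d).
Proof.
move=> SE; pose other (e : equation) : ('I_K.+1 * 'I_d)%type :=
  (odflt ord0 (unlift (tag e).1 (tag e).2), (tagged e).2).
have -> : K.+1 * d = #|{: 'I_K.+1 * 'I_d}| by rewrite card_prod !card_ord.
apply: (card_le_image_mul (g := other)).
move=> [[k1 j1] [m1 n1]] [[k2 j2] [m2 n2]] /(subsetP SE) + /(subsetP SE).
rewrite !inE /= => kj1 kj2 [k12 -> j12 ->]; subst k2.
rewrite eq_sym in kj1; rewrite eq_sym in kj2.
by rewrite -(lift_unlift_neq kj1) -(lift_unlift_neq kj2) j12.
Qed.

Definition tx_var (y : ('I_K.+2 * 'I_d) * 'I_(M - d)) : var Mv Nv dv :=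
  inl (existT (fun=> ('I_d * 'I_(M - d))%type) y.1.1 (y.1.2, y.2)).
Definition rx_var (y : ('I_K.+2 * 'I_d) * 'I_(N - d)) : var Mv Nv dv :=
  inr (existT (fun=> ('I_d * 'I_(N - d))%type) y.1.1 (y.1.2, y.2)).

Lemma card_vars_cover (S : {set equation}) :
  #|tx_index @: S| * (M - d) + #|rx_index @: S| * (N - d) <= #|\bigcup_(e in S) vars e|.
Proof.
have tx_var_inj : injective tx_var by move=> [[? ?] ?] [[? ?] ?] [-> -> ->].
have rx_var_inj : injective rx_var by move=> [[? ?] ?] [[? ?] ?] [-> -> ->].
have -> : #|tx_index @: S| * (M - d) = #|tx_var @: setX (tx_index @: S) setT|.
  by rewrite card_imset // cardsX cardsT card_ord.
have -> : #|rx_index @: S| * (N - d) = #|rx_var @: setX (rx_index @: S) setT|.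
  by rewrite card_imset // cardsX cardsT card_ord.
rewrite -cardsUI (_ : _ :&: _ = set0) ?cards0 ?addn0; last first.
  by apply/setP => x; rewrite !inE; apply/andP => -[/imsetP [? _ ->] /imsetP [? _]].
apply/subset_leq_card/subsetP => x; rewrite inE => /orP [] /imsetP [[i y]].
all: rewrite !inE /= andbT => /imsetP [e eS ->] ->; apply/bigcupP; exists e => //.
all: by rewrite inE /= !eqxx.
Qed.

Lemma leq_card_Eset : K.+2 * K.+1 * (d * d) <= #|E|.
Proof.
pose eq_of (x : ('I_K.+2 * 'I_K.+1 * ('I_d * 'I_d))%type) : equation :=
  existT (fun=> ('I_d * 'I_d)%type) (lift x.1.1 x.1.2, x.1.1) x.2.
have eq_of_inj : injective eq_of.
  move=> [[j1 k1] x1] [[j2 k2] x2] [+ j12 ->]; rewrite j12.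
  by move/(can_inj (bumpK j2))/val_inj ->.
have -> : K.+2 * K.+1 * (d * d) = #|eq_of @: setT|.
  by rewrite card_imset // cardsT !card_prod !card_ord.
apply/subset_leq_card/subsetP => _ /imsetP [[[j k] x] _ ->].
by rewrite inE /= eq_sym neq_lift.
Qed.

Lemma card_var : #|{: var Mv Nv dv}| = K.+2 * (d * (M - d)) + K.+2 * (d * (N - d)).
Proof.
rewrite card_sum (card_sigT_const 'I_K.+2 ('I_d * 'I_(M - d))%type).
by rewrite (card_sigT_const 'I_K.+2 ('I_d * 'I_(N - d))%type) !card_prod !card_ord.
Qed.

Lemma sym_proper_of_dim : K.+1 * d <= (M - d) + (N - d) -> sym_proper K.+2 M N d.
Proof.
move=> dim S SE; apply: leq_trans (card_vars_cover S).
exact: leq_convex_bound (card_eqn_tx SE) (card_eqn_rx SE) dim.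
Qed.

Lemma dim_of_sym_proper : 0 < d -> sym_proper K.+2 M N d -> K.+1 * d <= (M - d) + (N - d).
Proof.
move=> d_gt0 /(_ E (subxx E)) E_le_vars.
have := leq_trans leq_card_Eset (leq_trans E_le_vars (max_card _)).
by rewrite card_var -!mulnDr -mulnA leq_pmul2l // mulnCA leq_pmul2l.
Qed.

Lemma sym_proper_iff : 0 < d -> sym_proper K.+2 M N d <-> K.+1 * d <= (M - d) + (N - d).
Proof. by move=> d_gt0; split; [apply: dim_of_sym_proper | apply: sym_proper_of_dim]. Qed.

End SymmetricSystem.

Theorem corollary2 (K M N d : nat) :
  2 <= K -> 0 < M -> 0 < N -> 0 < d ->
  (d <= minn M (N - 1) ->
     (sym_proper K M N d <-> sym_proper K (M + 1) (N - 1) d)) /\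
  (d <= minn (M - 1) N ->
     (sym_proper K M N d <-> sym_proper K (M - 1) (N + 1) d)).
Proof.
case: K => [|[|K]] // _ _ _ d_gt0; rewrite !sym_proper_iff //.
split; rewrite leq_min => /andP [dM dN].
- by have -> : M + 1 - d + (N - 1 - d) = M - d + (N - d) by lia.
- by have -> : M - 1 - d + (N + 1 - d) = M - d + (N - d) by lia.
Qed.
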